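(* Let $G$ be a finite non-abelian group such that $G/Z(G)\cong \mathbb{Z}_p\times\mathbb{Z}_p$ for a prime $p$. Put $z=|Z(G)|$ and $n=\frac{(p-1)z}{p}$. Then $\mathrm{Spec}(\Gamma_G)=\{[0]^{(p+1)(n-1)},[-n]^{p},[np]^1\}$, $\mathrm{L\text{-}Spec}(\Gamma_G)=\{[0]^1,[np]^{(p+1)(n-1)},[(p+1)n]^{p}\}$, $\mathrm{Q\text{-}Spec}(\Gamma_G)=\{[np]^{(p+1)(n-1)},[n(p-1)]^{p},[2np]^1\}$, and $E(\Gamma_G)=LE(\Gamma_G)=SE(\Gamma_G)=2np$.
   Context: For a finite non-abelian group $G$ with center $Z(G)$ and $x\in G$, $x^G$ is the conjugacy class of $x$. The non-commuting conjugacy class graph (NCCC-graph) $\Gamma_G$ is the simple undirected graph with vertex set $\{x^G: x\in G\setminus Z(G)\}$, in which distinct vertices $x^G,y^G$ are adjacent iff $x'y'\neq y'x'$ for all $x'\in x^G$, $y'\in y^G$. For a simple graph $\mathcal G$ with adjacency matrix $A$ and diagonal degree matrix $D$, let $L=D-A$ and $Q=D+A$; $\mathrm{Spec}$, $\mathrm{L\text{-}Spec}$, $\mathrm{Q\text{-}Spec}$ denote the multisets of eigenvalues of $A$, $L$, $Q$, written $\{[\lambda_1]^{k_1},\dots\}$ where $[\lambda]^k$ means eigenvalue $\lambda$ of multiplicity $k$ (a term with multiplicity $0$ is absent). $E(\mathcal G)=\sum_{\lambda\in\mathrm{Spec}}|\lambda|$; with $\Delta(\mathcal G)=2|E(\mathcal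 G)|/|V(\mathcal G)|$ (twice the number of edges over the number of vertices), $LE(\mathcal G)=\sum_{\beta\in \mathrm{L\text{-}Spec}}|\beta-\Delta(\mathcal G)|$ and $SE(\mathcal G)=\sum_{\gamma\in\mathrm{Q\text{-}Spec}}|\gamma-\Delta(\mathcal G)|$ (sums with multiplicity). *)

From mathcomp Require Import all_boot all_order all_algebra all_fingroup all_solvable all_field.
Set Implicit Arguments. Unset Strict Implicit. Unset Printing Implicit Defensive.
Import GRing.Theory Num.Theory.

Section NCCC.
Variables (gT : finGroupType) (G : {group gT}).

Definition nccc_vertices : {set {set gT}} :=
  [set C in classes G | ~~ (C \subset 'Z(G))%g].

Definition nccc_adj (C D : {set gT}) : bool :=
  (C != D) && [forall x in C, forall y in D, (x * y)%g != (y * x)%g].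

Definition nccc_n := #|nccc_vertices|.

Definition nccc_vertex (i : 'I_nccc_n) : {set gT} := enum_val i.

End NCCC.

Local Open Scope ring_scope.

Definition nccc_A (gT : finGroupType) (G : {group gT}) : 'M[algC]_(nccc_n G) :=
  \matrix_(i, j) (nccc_adj (nccc_vertex i) (nccc_vertex j))%:R.

Definition nccc_D (gT : finGroupType) (G : {group gT}) : 'M[algC]_(nccc_n G) :=
  diag_mx (\row_i \sum_j nccc_A G i j).

Definition nccc_L (gT : finGroupType) (G : {group gT}) := nccc_D G - nccc_A G.
Definition nccc_Q (gT : finGroupType) (G : {group gT}) := nccc_D G + nccc_A G.

(* Delta = 2|E|/|V| = (sum of degrees) / |V|. *)
Definition nccc_Delta (gT : finGroupType) (G : {group gT}) : algC :=
  (\sum_i \sum_j nccc_A G i j) / (nccc_n G)%:R.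

(* The multiset of eigenvalues (roots of the characteristic polynomial,
   with multiplicity) of a square complex matrix. *)
Definition eigenvalues n (M : 'M[algC]_n) : seq algC :=
  sval (closed_field_poly_normal (char_poly M)).

Definition energy n (M : 'M[algC]_n) : algC := \sum_(l <- eigenvalues M) `|l|.
Definition shifted_energy n (M : 'M[algC]_n) (d : algC) : algC :=
  \sum_(l <- eigenvalues M) `|l - d|.

Definition nccc_E (gT : finGroupType) (G : {group gT}) := energy (nccc_A G).
Definition nccc_LE (gT : finGroupType) (G : {group gT}) :=
  shifted_energy (nccc_L G) (nccc_Delta G).
Definition nccc_SE (gT : finGroupType) (G : {group gT}) :=
  shifted_energy (nccc_Q G) (nccc_Delta G).

(* The multiset {[l1]^k1, ..., } as a sequence. *)
Definition mspec (s : seq (algC * nat)) : seq algC :=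
  flatten [seq nseq x.2 x.1 | x <- s].

From mathcomp Require Import all_boot all_order all_algebra all_fingroup all_solvable all_field.
From mathcomp Require Import spectral zify ring.
Import GRing.Theory Num.Theory.
Set Implicit Arguments. Unset Strict Implicit. Unset Printing Implicit Defensive.
Local Open Scope ring_scope.

(* If G/Z(G) is Z_p x Z_p, a noncentral x has a centralizer C_G(x) of order
   p|Z(G)| which is abelian (it is cyclic modulo the centre), so two noncentral
   elements commute iff they have the same centralizer.  Noncentral conjugacy
   classes have size p and C_G(x) \ Z(G) is a union of (p-1)|Z(G)|/p of them,
   hence the NCCC-graph is the complete (p+1)-partite graph with parts of size
   n = (p-1)|Z(G)|/p.  Its adjacency matrix A is real symmetric and satisfies
   A^3 = n^2 p A + n(p-1) A^2, so its eigenvalues lie in {0, -n, np}; their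
   multiplicities are forced by tr 1, tr A = 0 and tr A^2 = (p+1)n * np.  The
   graph is np-regular, so L = np - A and Q = np + A. *)

Lemma char_poly_conj (F : fieldType) n (P B : 'M[F]_n) : P \in unitmx ->
  char_poly (invmx P *m B *m P) = char_poly B.
Proof.
move=> Pu; pose Pc := map_mx polyC P; pose Pi := map_mx polyC (invmx P).
have PiPc : Pi *m Pc = 1%:M by rewrite -map_mxM mulVmx // map_mx1.
have conjE : char_poly_mx (invmx P *m B *m P) = Pi *m char_poly_mx B *m Pc.
  rewrite /char_poly_mx !map_mxM mulmxBr mulmxBl -/Pi -/Pc.
  by rewrite [Pi *m _%:M]scalar_mxC -[_%:M *m Pi *m Pc]mulmxA PiPc mulmx1.
rewrite /char_poly conjE !det_mulmx mulrC mulrA -det_mulmx.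
by rewrite -map_mxM mulmxV // map_mx1 det1 mul1r.
Qed.

Lemma char_poly_eigenvalues n (M : 'M[algC]_n) :
  char_poly M = \prod_(x <- eigenvalues M) ('X - x%:P).
Proof.
rewrite /eigenvalues; case: closed_field_poly_normal => s /= ->.
by rewrite (monicP (char_poly_monic M)) scale1r.
Qed.

Lemma eigenvalues_conj_diag n (P : 'M[algC]_n) (d : 'rV_n) : P \in unitmx ->
  perm_eq (eigenvalues (invmx P *m diag_mx d *m P)) [seq d 0 i | i <- enum 'I_n].
Proof.
move=> Pu; apply: prod_XsubC_eq.
rewrite -char_poly_eigenvalues char_poly_conj // char_poly_trig ?diag_mx_is_trig //.
rewrite big_map big_enum /=; apply: eq_big => [i|i _]; first by rewrite inE.
by rewrite mxE eqxx mulr1n.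
Qed.

Section NormalMatrix.
Variables (n : nat) (A : 'M[algC]_n).
Hypothesis normalA : A \is normalmx.

Let P := spectralmx A.
Let d := spectral_diag A.
Let conjP (X : 'M[algC]_n) := P *m X *m invmx P.

Let unitP : P \in unitmx. Proof. exact: spectral_unit. Qed.

Let conjPK X : invmx P *m conjP X *m P = X.
Proof. by rewrite /conjP !mulmxA mulVmx // mul1mx mulmxKV. Qed.

Let conjPM X Y : conjP (X *m Y) = conjP X *m conjP Y.
Proof. by rewrite /conjP !mulmxA mulmxKV. Qed.

Let conjPA : conjP A = diag_mx d.
Proof.
by rewrite /conjP {1}(orthomx_spectralP normalA) !mulmxA mulmxV // mul1mx mulmxK.
Qed.

Let diag_entry (r : 'rV[algC]_n) i : diag_mx r i i = r 0 i.
Proof. by rewrite mxE eqxx mulr1n. Qed.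

Lemma eigenvalues_normal : perm_eq (eigenvalues A) [seq d 0 i | i <- enum 'I_n].
Proof. by rewrite -{1}(conjPK A) conjPA eigenvalues_conj_diag. Qed.

Lemma eigenvalues_normal_affine (c e : algC) :
  perm_eq (eigenvalues (c%:M + e *: A)) [seq c + e * x | x <- eigenvalues A].
Proof.
have -> : c%:M + e *: A = invmx P *m diag_mx (\row_i (c + e * d 0 i)) *m P.
  have -> : diag_mx (\row_i (c + e * d 0 i)) = c%:M + e *: diag_mx d.
    apply/matrixP => i j; rewrite !mxE.
    by case: (i == j); rewrite ?mulr1n ?mulr0n ?mulr0 ?addr0.
  rewrite mulmxDr mulmxDl -scalemxAr -scalemxAl -conjPA conjPK.
  by rewrite scalar_mxC mulmxKV.
apply: perm_trans (eigenvalues_conj_diag _ unitP) _.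
rewrite perm_sym (perm_trans (perm_map _ eigenvalues_normal)) // -map_comp.
by rewrite (eq_map (fun i => mxE _ _ _ _)).
Qed.

Lemma sum_eigenvalues_normal : \sum_(x <- eigenvalues A) x = \tr A.
Proof.
rewrite (perm_big _ eigenvalues_normal) big_map big_enum /=.
rewrite -[in RHS](conjPK A) mxtrace_mulC mulmxA mulmxV // mul1mx conjPA.
by apply: eq_bigr => i _; rewrite diag_entry.
Qed.

Lemma sum_sqr_eigenvalues_normal : \sum_(x <- eigenvalues A) x ^+ 2 = \tr (A *m A).
Proof.
rewrite (perm_big _ eigenvalues_normal) big_map big_enum /=.
rewrite -[in RHS](conjPK (A *m A)) mxtrace_mulC mulmxA mulmxV // mul1mx conjPM conjPA.
by rewrite mulmx_diag; apply: eq_bigr => i _; rewrite diag_entry mxE expr2.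
Qed.

Lemma eigenvalues_normal_cubic (a b : algC) :
  A *m (A *m A) = a *: A + b *: (A *m A) ->
  {in eigenvalues A, forall x, x ^+ 3 = a * x + b * x ^+ 2}.
Proof.
move=> /(congr1 conjP); rewrite conjPM conjPM /conjP mulmxDr mulmxDl.
rewrite -!scalemxAr -!scalemxAl -/(conjP _) -/(conjP (A *m A)) conjPM conjPA.
rewrite !mulmx_diag => /matrixP eqA x.
rewrite (perm_mem eigenvalues_normal) => /mapP [i _ ->].
have := eqA i i; rewrite !mxE !eqxx !mulr1n.
by rewrite !exprS expr0 !mulr1.
Qed.

End NormalMatrix.

Lemma perm_mspec (s t : seq (algC * nat)) : perm_eq s t -> perm_eq (mspec s) (mspec t).
Proof. by move=> st; apply/perm_flatten/perm_map. Qed.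

Lemma map_mspec (f : algC -> algC) (s : seq (algC * nat)) :
  map f (mspec s) = mspec [seq (f x.1, x.2) | x <- s].
Proof.
rewrite /mspec map_flatten -!map_comp; congr flatten.
by apply: eq_map => x /=; rewrite map_nseq.
Qed.

Lemma big_mspec3 (F : algC -> algC) a i b j c k :
  \sum_(l <- mspec [:: (a, i); (b, j); (c, k)]) F l =
  F a *+ i + F b *+ j + F c *+ k.
Proof.
by rewrite /mspec /= !big_cat /= big_nil !big_nseq !iter_addr !addr0 addrA.
Qed.

Lemma shifted_energy_mspec3 n (M : 'M[algC]_n) d a i b j c k :
  perm_eq (eigenvalues M) (mspec [:: (a, i); (b, j); (c, k)]) ->
  shifted_energy M d = `|a - d| *+ i + `|b - d| *+ j + `|c - d| *+ k.
Proof. by move=> specM; rewrite /shifted_energy (perm_big _ specM) big_mspec3. Qed.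

Lemma energy_mspec3 n (M : 'M[algC]_n) a i b j c k :
  perm_eq (eigenvalues M) (mspec [:: (a, i); (b, j); (c, k)]) ->
  energy M = `|a| *+ i + `|b| *+ j + `|c| *+ k.
Proof. by move=> specM; rewrite /energy (perm_big _ specM) big_mspec3. Qed.

Lemma perm_mspec3_count (a b c : algC) (s : seq algC) :
  uniq [:: a; b; c] -> {subset s <= [:: a; b; c]} ->
  perm_eq s (mspec [:: (a, count_mem a s); (b, count_mem b s); (c, count_mem c s)]).
Proof.
rewrite /= !inE andbT !negb_or => /andP [/andP [nab nac] nbc] sabc.
apply/allP => x _; apply/eqP.
rewrite /mspec /= !count_cat !count_nseq /= addn0 ![_ == x]eq_sym.
have [xabc | xNabc] := boolP (x \in [:: a; b; c]); last first.
  rewrite (count_memPn (contra (@sabc x) xNabc)).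
  by move: xNabc; rewrite !inE !negb_or => /and3P [/negbTE-> /negbTE-> /negbTE->].
move: xabc; rewrite !inE => /or3P [] /eqP ->; rewrite eqxx.
- by rewrite (negbTE nab) (negbTE nac) !mul0n mul1n !addn0.
- by rewrite eq_sym (negbTE nab) (negbTE nbc) !mul0n mul1n addn0.
- by rewrite eq_sym (negbTE nac) eq_sym (negbTE nbc) !mul0n mul1n.
Qed.

Lemma sum_natr_bool (R : pzSemiRingType) (I : finType) (a : pred I) :
  \sum_i ((a i)%:R : R) = #|[pred i | a i]|%:R.
Proof.
rewrite -sumr_const [RHS]big_mkcond /=; apply: eq_bigr => i _.
by rewrite unfold_in; case: (a i).
Qed.

Lemma multipartite_multiplicities (n p c0 c1 c2 : nat) : (0 < n)%N -> (0 < p)%N ->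
  (c0 + c1 + c2 = (p + 1) * n)%N -> (n * p * c2 = n * c1)%N ->
  (n ^ 2 * c1 + (n * p) ^ 2 * c2 = (p + 1) * n * (n * p))%N ->
  [/\ c0 = ((p + 1) * (n - 1))%N, c1 = p & c2 = 1%N].
Proof.
move=> n_gt0 p_gt0 size_eq sum_eq sqr_eq.
have c1E : c1 = (p * c2)%N by apply/eqP; rewrite -(eqn_pmul2l n_gt0) mulnA sum_eq.
have c2E : c2 = 1%N.
  have npp_gt0 : (0 < n * n * p * (p + 1))%N by rewrite !muln_gt0 n_gt0 p_gt0 addn1.
  apply/eqP; rewrite -(eqn_pmul2l npp_gt0) muln1; apply/eqP.
  move: sqr_eq; rewrite c1E; nia.
split=> //; last by rewrite c1E c2E muln1.
move: size_eq; rewrite c1E c2E; nia.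
Qed.

Section CompleteMultipartite.
Variables (T : eqType) (N n p : nat) (part : 'I_N -> T).
Hypothesis card_part : forall i, #|[pred j | part j == part i]| = n.
Hypothesis N_eq : N = ((p + 1) * n)%N.
Hypotheses (n_gt0 : (0 < n)%N) (p_gt0 : (0 < p)%N).

Definition multipartite_adj : 'M[algC]_N := \matrix_(i, j) (part i != part j)%:R.
Definition same_part_mx : 'M[algC]_N := \matrix_(i, j) (part i == part j)%:R.

Local Notation A := multipartite_adj.
Local Notation S := same_part_mx.

Lemma card_other_parts i : #|[pred j | part i != part j]| = (n * p)%N.
Proof.
have := cardC [pred j | part j == part i]; rewrite card_part card_ord.
have -> : #|[predC [pred j | part j == part i]]| = #|[pred j | part i != part j]|.
  by apply: eq_card => j; rewrite !inE eq_sym.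
nia.
Qed.

Lemma multipartite_adj_row_sum i : \sum_j A i j = (n * p)%:R.
Proof.
rewrite -(card_other_parts i) -sum_natr_bool.
by apply: eq_bigr => j _; rewrite mxE.
Qed.

Lemma multipartite_adj_same_part : A *m S = n%:R *: A.
Proof.
apply/matrixP => i j; rewrite !mxE.
under eq_bigr do rewrite !mxE -natrM mulnb.
rewrite sum_natr_bool; have [eq_ij | neq_ij] /= := eqVneq (part i) (part j).
  rewrite mulr0 (eq_card (B := pred0)) ?card0 // => l.
  by rewrite !inE eq_ij eq_sym; case: (part l == part j).
rewrite mulr1 -(card_part j); congr _%:R; apply: eq_card => l.
by rewrite !inE; case: (part l =P part j) => [->|]; rewrite ?andbF ?neq_ij.
Qed.

Lemma multipartite_adj_sqr : A *m A = (n * p)%:R *: S + (n * (p - 1))%:R *: A.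
Proof.
apply/matrixP => i j; rewrite !mxE.
under eq_bigr do rewrite !mxE -natrM mulnb.
rewrite sum_natr_bool; have [eq_ij | neq_ij] /= := eqVneq (part i) (part j).
  rewrite mulr1 mulr0 addr0 -(card_other_parts i); congr _%:R.
  by apply: eq_card => l; rewrite !inE eq_ij eq_sym andbb.
rewrite mulr0 mulr1 add0r; congr _%:R.
have := cardUI [pred l | part l == part i] [pred l | part l == part j].
rewrite !card_part [#|[predI _ & _]|](eq_card (B := pred0)) => [|l]; last first.
  by rewrite !inE; case: (part l =P part i) => [->|] //=; rewrite (negbTE neq_ij).
have := cardC [predU [pred l | part l == part i] & [pred l | part l == part j]].
have -> : #|[predC [predU [pred l | part l == part i] & [pred l | part l == part j]]]|
   = #|[pred l | (part i != part l) && (part l != part j)]|.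
  by apply: eq_card => l; rewrite !inE negb_or (eq_sym (part l)).
rewrite card_ord card0 addn0 => sizeN sizeU; rewrite sizeU in sizeN.
by move: sizeN; move: #|_| => v; nia.
Qed.

Lemma multipartite_adj_cubic :
  A *m (A *m A) = (n * (n * p))%:R *: A + (n * (p - 1))%:R *: (A *m A).
Proof.
rewrite {1}multipartite_adj_sqr mulmxDr -!scalemxAr multipartite_adj_same_part.
by rewrite scalerA -natrM mulnC.
Qed.

Lemma mxtrace_multipartite_adj : \tr A = 0.
Proof. by apply: big1 => i _; rewrite mxE eqxx. Qed.

Lemma mxtrace_multipartite_adj_sqr : \tr (A *m A) = (N * (n * p))%:R.
Proof.
rewrite multipartite_adj_sqr /mxtrace.
under eq_bigr do rewrite !mxE !eqxx /= mulr1 mulr0 addr0.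
by rewrite -natr_sum sum_nat_const card_ord.
Qed.

Lemma multipartite_adj_normal : A \is normalmx.
Proof.
apply: symmetric_normalmx; last by apply/mxOverP => i j; rewrite mxE realn.
by apply/is_hermitianmxP; rewrite expr0 scale1r; apply/matrixP => i j; rewrite !mxE eq_sym.
Qed.

Lemma multipartite_eigenvalue x :
  x \in eigenvalues A -> x \in [:: 0; - n%:R; (n * p)%:R].
Proof.
move=> /(eigenvalues_normal_cubic multipartite_adj_normal multipartite_adj_cubic) x3.
have : x * (x + n%:R) * (x - (n * p)%:R) = 0.
  rewrite -(subrr (x ^+ 3)) {2}x3 !natrM (natrB _ p_gt0); ring.
by move/eqP; rewrite !mulf_eq0 addr_eq0 subr_eq0 !inE orbA.
Qed.

Lemma multipartite_spectrum : perm_eq (eigenvalues A)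
  (mspec [:: (0, ((p + 1) * (n - 1))%N); (- n%:R, p); ((n * p)%:R, 1%N)]).
Proof.
have normalA := multipartite_adj_normal.
have uniq_vals : uniq [:: 0; - n%:R; (n * p)%:R :> algC].
  rewrite /= !inE !negb_or andbT (eq_sym 0) oppr_eq0 (eq_sym 0) !pnatr_eq0 -!lt0n.
  rewrite muln_gt0 n_gt0 p_gt0 /= -subr_eq0 -opprD oppr_eq0 -natrD.
  by rewrite pnatr_eq0 -lt0n addn_gt0 n_gt0.
have s_perm := perm_mspec3_count uniq_vals multipartite_eigenvalue.
move: (count_mem 0 _) (count_mem (- n%:R) _) (count_mem (n * p)%:R _) s_perm.
move=> c0 c1 c2 s_perm.
have size_eq : (c0 + c1 + c2 = (p + 1) * n)%N.
  rewrite -N_eq -(size_enum_ord N) -(size_map (fun i => spectral_diag A 0 i)).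
  rewrite -(perm_size (eigenvalues_normal normalA)) (perm_size s_perm).
  by rewrite /mspec /= !size_cat !size_nseq /=; lia.
have := sum_eigenvalues_normal normalA.
rewrite (perm_big _ s_perm) big_mspec3 mxtrace_multipartite_adj => /eqP.
rewrite mul0rn add0r mulNrn addrC subr_eq0 -!mulrnA eqr_nat => /eqP sum_eq.
have := sum_sqr_eigenvalues_normal normalA.
rewrite (perm_big _ s_perm) big_mspec3 mxtrace_multipartite_adj_sqr => /eqP.
rewrite expr0n mul0rn add0r sqrrN -!natrX -!mulrnA -natrD eqr_nat => /eqP.
rewrite [in RHS]N_eq => sqr_eq.
have [c0E c1E c2E] := multipartite_multiplicities n_gt0 p_gt0 size_eq sum_eq sqr_eq.
by rewrite c0E c1E c2E in s_perm.
Qed.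

Lemma multipartite_spectrum_affine (c e : algC) :
  perm_eq (eigenvalues (c%:M + e *: A))
    (mspec [:: (c, ((p + 1) * (n - 1))%N); (c - e * n%:R, p);
               (c + e * (n * p)%:R, 1%N)]).
Proof.
apply: perm_trans (eigenvalues_normal_affine multipartite_adj_normal c e) _.
apply: perm_trans (perm_map _ multipartite_spectrum) _.
by rewrite map_mspec /= mulr0 addr0 mulrN.
Qed.

End CompleteMultipartite.

Lemma nonabelian_noncentral (gT : finGroupType) (G : {group gT}) :
  ~~ abelian G -> exists2 x, x \in G & x \notin 'Z(G)%g.
Proof.
move=> nabG; have : ~~ (G \subset 'Z(G))%g.
  by apply: contra nabG => sGZ; rewrite abelianE (subset_trans sGZ) ?subsetIr.
by case/subsetPn => x; exists x.
Qed.

Section CentralQuotientPxP.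
Variables (gT : finGroupType) (G : {group gT}) (p : nat).
Hypotheses (p_pr : prime p) (GZ_iso : (G / 'Z(G))%g \isog [set: 'Z_p * 'Z_p]).

Local Notation Z := 'Z(G)%G.
Local Open Scope group_scope.

Let nZG : G \subset 'N(Z). Proof. exact: normal_norm (center_normal G). Qed.

Lemma card_quotient_center : #|G / Z| = (p * p)%N.
Proof.
by rewrite (card_isog GZ_iso) cardsT card_prod card_ord Zp_cast // prime_gt1.
Qed.

Lemma quotient_center_abelian : abelian (G / Z).
Proof.
rewrite (isog_abelian GZ_iso); apply/centsP => [[a1 a2]] _ [b1 b2] _.
by rewrite /commute; congr pair; apply: (centsP (Zp_abelian _)); rewrite ?inE.
Qed.

Lemma card_center_quotient : #|G| = (p * p * #|Z|)%N.
Proof.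
by rewrite -(Lagrange (center_sub G)) -card_quotient // card_quotient_center mulnC.
Qed.

Lemma conjg_center_coset x g : x \in G -> g \in G ->
  exists2 c, c \in Z & x ^ g = x * c.
Proof.
move=> xG gG; exists [~ x, g]; last exact: conjg_mulR.
by apply: (subsetP (der1_min nZG quotient_center_abelian)); apply: mem_commg.
Qed.

Lemma center_sub_cent1 x : x \in G -> Z \subset 'C_G[x].
Proof.
move=> xG; apply/subsetP => c /centerP [cG cGc]; rewrite inE cG /=.
by apply/cent1P; apply: cGc.
Qed.

Lemma cent1_eq_commute x y : y \in G -> 'C_G[x] = 'C_G[y] -> commute x y.
Proof.
move=> yG eqC; have : y \in 'C_G[x] by rewrite eqC inE yG cent1id.
by case/setIP => _ /cent1P.
Qed.

Section Noncentral.
Variable x : gT.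
Hypotheses (xG : x \in G) (xNZ : x \notin Z).

Lemma card_cent1_noncentral : #|'C_G[x]| = (p * #|Z|)%N.
Proof.
have sZC := center_sub_cent1 xG; have sCG : 'C_G[x] \subset G := subsetIl _ _.
have indexM : (#|G : 'C_G[x]| * #|'C_G[x] : Z| = p ^ 2)%N.
  by rewrite (Lagrange_index sCG sZC) -card_quotient // card_quotient_center.
have index_CZ : #|'C_G[x] : Z| != 1%N.
  rewrite indexg_eq1; apply: contra xNZ => /subsetP; apply.
  by rewrite inE xG cent1id.
have index_GC : #|G : 'C_G[x]| != 1%N.
  rewrite indexg_eq1; apply: contra xNZ => /subsetP sGC; apply/centerP.
  by split=> // y /sGC /setIP [_ /cent1P].
have : (#|'C_G[x] : Z| %| p ^ 2)%N by rewrite -indexM dvdn_mull.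
case/(dvdn_pfactor _ _ p_pr) => [[|[|[|m]]]] //= _ eq_index.
- by rewrite eq_index in index_CZ.
- by rewrite -(Lagrange sZC) eq_index expn1 mulnC.
- move: indexM; rewrite eq_index -{2}(mul1n (p ^ 2)%N) => /eqP.
  by rewrite eqn_pmul2r ?expn_gt0 ?prime_gt0 // (negbTE index_GC).
Qed.

Lemma cent1_abelian_noncentral : abelian 'C_G[x].
Proof.
have sZC := center_sub_cent1 xG.
have index_CZ : #|'C_G[x] : Z| = p.
  have := Lagrange sZC; rewrite card_cent1_noncentral mulnC => /eqP.
  by rewrite eqn_pmul2r ?cardG_gt0 // => /eqP.
apply: (@cyclic_factor_abelian _ Z).
  by rewrite subsetI sZC centsC (subset_trans (subsetIl _ _)) // centsC subsetIr.
apply: prime_cyclic; rewrite card_quotient ?index_CZ //.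
exact: subset_trans (subsetIl _ _) nZG.
Qed.

End Noncentral.

Lemma commute_cent1_eq x y : x \in G -> x \notin Z -> y \in G -> y \notin Z ->
  commute x y -> 'C_G[x] = 'C_G[y].
Proof.
move=> xG xNZ yG yNZ cxy.
have yC : y \in 'C_G[x] by rewrite inE yG; apply/cent1P/esym.
apply/eqP; rewrite eqEcard !card_cent1_noncentral // leqnn andbT.
apply/subsetP => u uC; rewrite inE (subsetP (subsetIl _ _) _ uC).
by apply/cent1P; apply: (centsP (cent1_abelian_noncentral xG xNZ)).
Qed.

Lemma mem_class_noncentral x u : x \in G -> x \notin Z -> u \in x ^: G ->
  [/\ u \in G, u \notin Z & 'C_G[u] = 'C_G[x]].
Proof.
move=> xG xNZ; case/imsetP => g gG ->.
have xgG : x ^ g \in G by rewrite groupJ.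
have xgNZ : x ^ g \notin Z by rewrite memJ_norm // (subsetP nZG).
split=> //; symmetry; apply: commute_cent1_eq => //.
have [c cZ ->] := conjg_center_coset xG gG.
by apply: commuteM; [apply: commute_refl | case/centerP: cZ => _ cGc; apply/esym/cGc].
Qed.

Definition class_cent (C : {set gT}) := 'C_G[repr C].

Lemma nccc_verticesP C : reflect (exists2 x, x \in G & x \notin Z /\ C = x ^: G)
  (C \in nccc_vertices G).
Proof.
rewrite inE; apply: (iffP andP) => [[/imsetP [x xG ->] nsub] | [x xG [xNZ ->]]].
  exists x => //; split=> //; apply: contra nsub => xZ.
  by apply/subsetP => _ /imsetP [g gG ->]; rewrite memJ_norm // (subsetP nZG).
rewrite mem_classes //; split=> //.
by apply: contra xNZ => /subsetP; apply; apply: class_refl.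
Qed.

Lemma class_cent_class x : x \in G -> x \notin Z -> class_cent (x ^: G) = 'C_G[x].
Proof.
move=> xG xNZ.
have repr_x : repr (x ^: G) \in x ^: G by apply: mem_repr (class_refl G x).
by rewrite /class_cent; have [_ _ ->] := mem_class_noncentral xG xNZ repr_x.
Qed.

Lemma nccc_adjE C D : C \in nccc_vertices G -> D \in nccc_vertices G ->
  nccc_adj C D = (class_cent C != class_cent D).
Proof.
move=> /nccc_verticesP [x xG [xNZ ->]] /nccc_verticesP [y yG [yNZ ->]].
rewrite /nccc_adj !class_cent_class //.
have [eqC | neqC] /= := eqVneq 'C_G[x] 'C_G[y].
  apply/negbTE/nandP; right; apply/forall_inPn; exists x; first exact: class_refl.
  apply/forall_inPn; exists y; first exact: class_refl.
  by rewrite negbK (cent1_eq_commute yG eqC).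
apply/andP; split.
  by apply: contra neqC => /eqP eqxy; rewrite -class_cent_class // eqxy class_cent_class.
apply/forall_inP => u xGu; apply/forall_inP => v yGv; apply/eqP => cuv.
have [uG uNZ Cu] := mem_class_noncentral xG xNZ xGu.
have [vG vNZ Cv] := mem_class_noncentral yG yNZ yGv.
by move: neqC; rewrite -Cu -Cv (commute_cent1_eq uG uNZ vG vNZ cuv) eqxx.
Qed.

Lemma card_class_noncentral x : x \in G -> x \notin Z -> #|x ^: G| = p.
Proof.
move=> xG xNZ; rewrite -index_cent1.
have := Lagrange (subsetIl G 'C[x]); rewrite card_cent1_noncentral //.
rewrite card_center_quotient [in RHS]mulnAC => /eqP.
by rewrite eqn_pmul2l ?muln_gt0 ?cardG_gt0 ?prime_gt0 // => /eqP.
Qed.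

Lemma card_cover_nccc (V : {set {set gT}}) : V \subset nccc_vertices G ->
  #|cover V| = (#|V| * p)%N.
Proof.
move=> sV; have : trivIset V.
  apply: (@trivIsetS _ _ (classes G)); last by case/and3P: (classes_partition G).
  by apply: subset_trans sV _; apply/subsetP => C; rewrite inE => /andP [].
rewrite /trivIset => /eqP <-; rewrite -sum_nat_const.
apply: eq_bigr => C /(subsetP sV) /nccc_verticesP [x xG [xNZ ->]].
exact: card_class_noncentral.
Qed.

Lemma card_class_cent_fibre x : x \in G -> x \notin Z ->
  (#|[set D in nccc_vertices G | class_cent D == 'C_G[x]]| * p = (p - 1) * #|Z|)%N.
Proof.
move=> xG xNZ; rewrite -card_cover_nccc; last first.
  by apply/subsetP => D; rewrite inE => /andP [].
have -> : cover [set D in nccc_vertices G | class_cent D == 'C_G[x]] = 'C_G[x] :\: Z.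
  apply/setP => u; apply/bigcupP/setDP.
    case=> D; rewrite inE => /andP [/nccc_verticesP [y yG [yNZ ->]] /eqP CDx] yGu.
    have [uG uNZ Cu] := mem_class_noncentral yG yNZ yGu.
    by rewrite -CDx class_cent_class // -Cu inE uG cent1id.
  case=> uC uNZ; have uG : u \in G := subsetP (subsetIl _ _) _ uC.
  exists (u ^: G); last exact: class_refl.
  rewrite inE class_cent_class //; apply/andP; split.
    by apply/nccc_verticesP; exists u.
  apply/eqP/esym/commute_cent1_eq => //; apply/esym/cent1P; by case/setIP: uC.
by rewrite cardsD (setIidPr (center_sub_cent1 xG)) card_cent1_noncentral // mulnBl mul1n.
Qed.

Lemma card_nccc_vertices : (nccc_n G * p = (p * p - 1) * #|Z|)%N.
Proof.
rewrite -card_cover_nccc //.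
have -> : cover (nccc_vertices G) = G :\: Z.
  apply/setP => u; apply/bigcupP/setDP.
    case=> _ /nccc_verticesP [y yG [yNZ ->]] yGu.
    by have [uG uNZ _] := mem_class_noncentral yG yNZ yGu.
  by case=> uG uNZ; exists (u ^: G); [apply/nccc_verticesP; exists u | apply: class_refl].
by rewrite cardsD (setIidPr (center_sub G)) card_center_quotient mulnBl mul1n.
Qed.

Definition nccc_part (i : 'I_(nccc_n G)) := class_cent (nccc_vertex i).

Local Notation n := ((p - 1) * #|Z| %/ p)%N.

Lemma card_nccc_part i : #|[pred j | nccc_part j == nccc_part i]| = n.
Proof.
have /nccc_verticesP [x xG [xNZ Ei]] := enum_valP i.
rewrite /nccc_part {2}/nccc_vertex Ei class_cent_class //.
rewrite -(card_class_cent_fibre xG xNZ) mulnK ?prime_gt0 //.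
rewrite -(card_imset _ enum_val_inj); apply: eq_card => D.
rewrite inE; apply/imsetP/andP => [[j] | [Dv /eqP CD]].
  by rewrite inE => CDx ->; split; [apply: enum_valP | apply: CDx].
exists (enum_rank_in Dv D); last by rewrite /nccc_vertex enum_rankK_in.
by rewrite inE /nccc_vertex enum_rankK_in // CD.
Qed.

Lemma nccc_A_multipartite : nccc_A G = multipartite_adj nccc_part.
Proof. by apply/matrixP => i j; rewrite !mxE nccc_adjE //; apply: enum_valP. Qed.

End CentralQuotientPxP.

Section NcccSpectra.
Variables (gT : finGroupType) (G : {group gT}) (p : nat).
Hypotheses (p_pr : prime p) (GZ_iso : (G / 'Z(G))%g \isog [set: 'Z_p * 'Z_p]).
Hypothesis G_nonabelian : ~~ abelian G.

Local Notation Z := 'Z(G)%G.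
Local Notation n := ((p - 1) * #|Z| %/ p)%N.

Lemma nccc_part_size : (n * p = (p - 1) * #|Z|)%N.
Proof.
have [x xG xNZ] := nonabelian_noncentral G_nonabelian.
by rewrite -(card_class_cent_fibre p_pr GZ_iso xG xNZ) mulnK ?prime_gt0.
Qed.

Lemma nccc_part_gt0 : (0 < n)%N.
Proof.
have := nccc_part_size; have := prime_gt1 p_pr; have := cardG_gt0 Z.
by case: n => // Z_gt0 p_gt1; rewrite mul0n => /esym /eqP; rewrite muln_eq0; lia.
Qed.

Lemma nccc_n_eq : nccc_n G = ((p + 1) * n)%N.
Proof.
apply/eqP; rewrite -(eqn_pmul2r (prime_gt0 p_pr)) (card_nccc_vertices p_pr GZ_iso).
rewrite -mulnA nccc_part_size mulnA; apply/eqP; congr (_ * _)%N.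
by have := prime_gt0 p_pr; nia.
Qed.

Let N_eq := nccc_n_eq.
Let card_part := card_nccc_part p_pr GZ_iso.
Let n_gt0 := nccc_part_gt0.
Let p_gt0 := prime_gt0 p_pr.
Let nccc_A_eq := nccc_A_multipartite p_pr GZ_iso.
Let row_sum := multipartite_adj_row_sum card_part N_eq n_gt0 p_gt0.

Lemma nccc_D_scalar : nccc_D G = (n * p)%:R%:M.
Proof.
apply/matrixP => i j.
by rewrite !mxE nccc_A_eq row_sum.
Qed.

Lemma nccc_Delta_eq : nccc_Delta G = (n * p)%:R.
Proof.
rewrite /nccc_Delta nccc_A_eq.
under eq_bigr do rewrite row_sum.
rewrite sumr_const card_ord -[_ *+ nccc_n G]mulr_natr mulfK //.
by rewrite pnatr_eq0 N_eq muln_eq0 negb_or addn_eq0 andbF -lt0n n_gt0.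
Qed.

Let spectrum := multipartite_spectrum_affine card_part N_eq n_gt0 p_gt0.

Lemma nccc_A_spectrum : perm_eq (eigenvalues (nccc_A G))
  (mspec [:: (0, ((p + 1) * (n - 1))%N); (- n%:R, p); ((n * p)%:R, 1%N)]).
Proof.
have := spectrum 0 1.
by rewrite raddf0 add0r scale1r !mul1r sub0r add0r nccc_A_eq.
Qed.

Lemma nccc_L_spectrum : perm_eq (eigenvalues (nccc_L G))
  (mspec [:: ((n * p)%:R, ((p + 1) * (n - 1))%N); (((p + 1) * n)%:R, p); (0, 1%N)]).
Proof.
have [vL1 vL2] : (n * p)%:R - (-1) * n%:R = ((p + 1) * n)%:R :> algC /\
                 (n * p)%:R + (-1) * (n * p)%:R = 0 :> algC.
  by split; rewrite ?natrM ?natrD; ring.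
have := spectrum (n * p)%:R (-1).
by rewrite vL1 vL2 scaleN1r /nccc_L nccc_D_scalar nccc_A_eq.
Qed.

Lemma nccc_Q_spectrum : perm_eq (eigenvalues (nccc_Q G))
  (mspec [:: ((n * p)%:R, ((p + 1) * (n - 1))%N); ((n * (p - 1))%:R, p);
             ((2 * n * p)%:R, 1%N)]).
Proof.
have [vQ1 vQ2] : (n * p)%:R - 1 * n%:R = (n * (p - 1))%:R :> algC /\
                 (n * p)%:R + 1 * (n * p)%:R = (2 * n * p)%:R :> algC.
  by split; rewrite !natrM ?(natrB _ p_gt0); ring.
have := spectrum (n * p)%:R 1.
by rewrite vQ1 vQ2 scale1r /nccc_Q nccc_D_scalar nccc_A_eq.
Qed.

End NcccSpectra.

Theorem theorem2p3 (gT : finGroupType) (G : {group gT}) (p : nat) :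
  prime p ->
  ~~ abelian G ->
  (G / 'Z(G))%g \isog [set: 'Z_p * 'Z_p] ->
  let z := #|'Z(G)%g|%N in
  let n := ((p - 1) * z %/ p)%N in
  [/\ perm_eq (eigenvalues (nccc_A G))
        (mspec [:: (0, ((p + 1) * (n - 1))%N); (- n%:R, p); ((n * p)%:R, 1%N)]),
      perm_eq (eigenvalues (nccc_L G))
        (mspec [:: (0, 1%N); ((n * p)%:R, ((p + 1) * (n - 1))%N);
                   (((p + 1) * n)%:R, p)]),
      perm_eq (eigenvalues (nccc_Q G))
        (mspec [:: ((n * p)%:R, ((p + 1) * (n - 1))%N); ((n * (p - 1))%:R, p);
                   ((2 * n * p)%:R, 1%N)]) &
      [/\ nccc_E G = (2 * n * p)%:R, nccc_LE G = (2 * n * p)%:R &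
          nccc_SE G = (2 * n * p)%:R]].
Proof.
move=> p_pr nabG GZ_iso z n.
have specA := nccc_A_spectrum p_pr GZ_iso nabG.
have specL := nccc_L_spectrum p_pr GZ_iso nabG.
have specQ := nccc_Q_spectrum p_pr GZ_iso nabG.
have Delta := nccc_Delta_eq p_pr GZ_iso nabG.
rewrite -/z -/n in specA specL specQ Delta; clearbody z n.
have p_gt0 := prime_gt0 p_pr.
have energy_val : n%:R *+ p + (n * p)%:R *+ 1 = (2 * n * p)%:R :> algC.
  by rewrite -!mulrnA -natrD muln1 addnn -mul2n mulnA.
split=> //.
  apply: perm_trans specL _; by apply/perm_mspec; rewrite -(perm_rot 2).
split.
- by rewrite /nccc_E (energy_mspec3 specA) normr0 mul0rn add0r normrN !normr_nat.
- rewrite /nccc_LE (shifted_energy_mspec3 _ specL) Delta subrr normr0 mul0rn add0r.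
  rewrite sub0r normrN -natrB ?normr_nat; last by rewrite mulnC leq_mul2r leq_addr orbT.
  by rewrite mulnDl mul1n mulnC addKn energy_val.
- rewrite /nccc_SE (shifted_energy_mspec3 _ specQ) Delta subrr normr0 mul0rn add0r.
  have le_nQ : (n * (p - 1) <= n * p)%N by rewrite leq_mul ?leq_subr.
  have le_np2 : (n * p <= 2 * n * p)%N by rewrite -mulnA mul2n -addnn leq_addr.
  rewrite -[(n * (p - 1))%:R - _]opprB normrN -!natrB // !normr_nat.
  have -> : (2 * n * p - n * p = n * p)%N by rewrite -mulnA mul2n -addnn addnK.
  by rewrite -mulnBr subKn // muln1 energy_val.
Qed.
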